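(* Let $\mathcal{M}$ be a space of closed smooth Riemannian manifolds, considered up to isospectrality, and let $\gamma$ be a real number with $\sup\{\dim X: X\in\mathcal{M}\}<2\gamma$. For $X_1,X_2\in\mathcal{M}$ define \[ d(X_1,X_2):=\sup_{\gamma<s<\gamma+1}\left|\log\left|\frac{\zeta_{X_1}(s)}{\zeta_{X_2}(s)}\right|\right|, \] where $\Re(s)>\gamma$ is a common half plane of convergence of the spectral zeta functions of $X_1$ and $X_2$. Then $d$ defines a metric on $\mathcal{M}$.
   Context: Two Riemannian manifolds are isospectral if their Laplace–Beltrami operators have the same spectrum with multiplicities. For a closed smooth Riemannian manifold $X$ with Laplace–Beltrami operator $\Delta_X$, the spectral zeta function is $\zeta_X(s)=\mathrm{tr}(\Delta_X^{-s})=\sum_{\lambda}\lambda^{-s}$, the sum running over the nonzero eigenvalues of $\Delta_X$ counted with multiplicity; it converges absolutely for $\Re(s)>\dim(X)/2$. *)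

From Stdlib Require Import Reals.
From Coquelicot Require Import Coquelicot.
Open Scope R_scope.

Record SpecManifold := mkSpecManifold {
  sm_dim : nat;
  sm_eig : nat -> R
}.

(* Properties every such spectrum has (Weyl law consequence: the
   zeta series converges absolutely for s > dim/2). *)
Definition admissible (X : SpecManifold) : Prop :=
  (1 <= sm_dim X)%nat /\
  (forall k, 0 < sm_eig X k) /\
  (forall k, sm_eig X k <= sm_eig X (S k)) /\
  (forall s : R, INR (sm_dim X) / 2 < s ->
     ex_series (fun k => Rpower (sm_eig X k) (- s))).

(* Spectral zeta function zeta_X(s) = sum over nonzero eigenvalues of lambda^(-s), s real. *)
Definition zeta (X : SpecManifold) (s : R) : R :=
  Series (fun k => Rpower (sm_eig X k) (- s)).

(* Isospectrality: same spectrum with multiplicities (the zero eigenvalue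
   has multiplicity 1 for connected manifolds). *)
Definition isospectral (X Y : SpecManifold) : Prop :=
  forall k, sm_eig X k = sm_eig Y k.

Definition zeta_dist (gamma : R) (X1 X2 : SpecManifold) : Rbar :=
  Lub_Rbar (fun r => exists s, gamma < s < gamma + 1 /\
                      r = Rabs (ln (Rabs (zeta X1 s / zeta X2 s)))).

From Stdlib Require Import Reals Lra Lia Factorial.
From Coquelicot Require Import Coquelicot.
Open Scope R_scope.

(* On gamma < s < gamma + 1 every zeta function is a positive Dirichlet
   series bounded above and away from 0, so d is the sup-distance between the
   bounded functions s |-> ln zeta_X(s) on that interval, hence a finite
   pseudometric.  If d(X, Y) = 0 then zeta_X = zeta_Y on the interval.  A
   Dirichlet series converging for s > sigma expands around every s0 > sigma
   in a power series of radius s0 - sigma, so this equality propagates to all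
   s > gamma.  As s -> +oo the smallest remaining eigenvalue dominates, and
   the eigenvalues are recovered one by one. *)

Lemma exp_le_compat x y : x <= y -> exp x <= exp y.
Proof.
  intros H. destruct (Rle_lt_or_eq_dec _ _ H) as [Hlt | ->].
  - left; apply exp_increasing; exact Hlt.
  - right; reflexivity.
Qed.

Lemma pow_div_fact_le_exp (x : R) (n : nat) : 0 <= x -> x ^ n / INR (fact n) <= exp x.
Proof.
  intros Hx. eapply Rle_trans; [| apply (exp_ge_taylor x n Hx)].
  destruct n as [|n]; [simpl; lra|].
  change (sum_f_R0 ?f (S n)) with (sum_f_R0 f n + f (S n)). cbv beta.
  assert (0 <= sum_f_R0 (fun k => x ^ k / INR (fact k)) n).
  { apply cond_pos_sum. intro k. apply Rmult_le_pos.
    - apply pow_le; exact Hx.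
    - left; apply Rinv_0_lt_compat, INR_fact_lt_0. }
  lra.
Qed.

Lemma ex_series_Rabs_le (a b : nat -> R) :
  (forall n, Rabs (a n) <= b n) -> ex_series b -> ex_series a.
Proof. intros H Hb. apply (ex_series_le a b); [exact H | exact Hb]. Qed.

Lemma Series_Rabs_le (a b : nat -> R) :
  (forall n, Rabs (a n) <= b n) -> ex_series b -> Rabs (Series a) <= Series b.
Proof.
  intros H Hb. eapply Rle_trans; [apply Series_Rabs|].
  - apply (ex_series_Rabs_le _ b); [intro n; rewrite Rabs_Rabsolu; apply H | exact Hb].
  - apply Series_le; [intro n; split; [apply Rabs_pos | apply H] | exact Hb].
Qed.

Lemma Series_nonneg (a : nat -> R) : (forall k, 0 <= a k) -> ex_series a -> 0 <= Series a.
Proof.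
  intros H Ha. rewrite <- (Rmult_0_l (Series a)), <- Series_scal_l.
  apply Series_le; [| exact Ha]. intro k; rewrite Rmult_0_l; split; [lra | apply H].
Qed.

Lemma Series_ge_head (a : nat -> R) : (forall k, 0 <= a k) -> ex_series a -> a 0%nat <= Series a.
Proof.
  intros H Ha. rewrite Series_incr_1 by exact Ha.
  assert (0 <= Series (fun k => a (S k))).
  { apply Series_nonneg; [intro; apply H | apply ex_series_incr_1 in Ha; exact Ha]. }
  lra.
Qed.

Lemma Series_scal_geom (c q : R) : Rabs q < 1 ->
  ex_series (fun k => c * q ^ k) /\ Series (fun k => c * q ^ k) = c / (1 - q).
Proof.
  intros Hq. split.
  - apply (ex_series_scal_l c (fun k => q ^ k)). apply ex_series_geom; exact Hq.
  - rewrite Series_scal_l. change (Series (pow q)) with (Series (fun k => q ^ k)).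
    rewrite (is_series_unique _ _ (is_series_geom q Hq)). reflexivity.
Qed.

Lemma sum_f_R0_Series (f : nat -> nat -> R) N : (forall n, ex_series (f n)) ->
  ex_series (fun k => sum_f_R0 (fun n => f n k) N) /\
  sum_f_R0 (fun n => Series (f n)) N = Series (fun k => sum_f_R0 (fun n => f n k) N).
Proof.
  intros Hf. induction N as [|N [IHex IHeq]]; simpl.
  - split; [exact (Hf 0%nat) | reflexivity].
  - split.
    + apply (ex_series_plus (fun k => sum_f_R0 (fun n => f n k) N) (f (S N))); auto.
    + rewrite IHeq, <- Series_plus; auto.
Qed.

Lemma is_series_of_geom_error (a : nat -> R) (l C q : R) :
  0 <= C -> Rabs q < 1 -> (forall N, Rabs (sum_f_R0 a N - l) <= C * q ^ N) ->
  is_series a l.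
Proof.
  intros HC Hq Herr. apply is_series_Reals. intros eps Heps.
  assert (Hy : 0 < eps / (C + 1)) by (apply Rdiv_lt_0_compat; lra).
  destruct (pow_lt_1_zero q Hq _ Hy) as [N0 HN0].
  exists N0. intros n Hn. unfold Rdist.
  eapply Rle_lt_trans; [apply Herr|].
  specialize (HN0 n Hn).
  apply Rle_lt_trans with (C * (eps / (C + 1))).
  - apply Rmult_le_compat_l; [exact HC|]. eapply Rle_trans; [apply Rle_abs | lra].
  - replace (C * (eps / (C + 1))) with (eps * (C / (C + 1))) by (field; lra).
    assert (C / (C + 1) < 1) by (apply (Rmult_lt_reg_r (C + 1)); [lra | field_simplify; lra]).
    nra.
Qed.

Definition exp_partial_sum (N : nat) (y : R) : R :=
  sum_f_R0 (fun n => / INR (fact n) * y ^ n) N.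

Lemma exp_sub_partial_sum_le (y q M : R) (N : nat) : 0 <= q < 1 -> 0 <= M ->
  Rabs y <= q * M -> Rabs (exp y - exp_partial_sum N y) <= q ^ (S N) * exp M / (1 - q).
Proof.
  intros Hq HM Hy.
  set (b := fun n => / INR (fact n) * y ^ n).
  assert (Hb : is_series b (exp y)) by (apply is_pseries_R, is_exp_Reals).
  assert (Hex : ex_series b) by (exists (exp y); exact Hb).
  pose proof (is_series_unique _ _ Hb) as Hsum.
  rewrite (Series_incr_n b (S N)) in Hsum by (lia || exact Hex). simpl pred in Hsum.
  replace (exp y - exp_partial_sum N y) with (Series (fun k => b (S N + k)%nat))
    by (unfold exp_partial_sum; fold b; lra).
  assert (Hqa : Rabs q < 1) by (rewrite Rabs_pos_eq; lra).
  destruct (Series_scal_geom (q ^ (S N) * exp M) q Hqa) as [Hgex Hgsum].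
  rewrite <- Hgsum. apply Series_Rabs_le; [| exact Hgex].
  intro k. unfold b. set (m := (S N + k)%nat).
  rewrite Rabs_mult, Rabs_inv, (Rabs_pos_eq (INR (fact m))) by (left; apply INR_fact_lt_0).
  rewrite <- RPow_abs.
  replace (q ^ S N * exp M * q ^ k) with (q ^ m * exp M) by (unfold m; rewrite pow_add; ring).
  apply Rle_trans with (/ INR (fact m) * (q * M) ^ m).
  { apply Rmult_le_compat_l; [left; apply Rinv_0_lt_compat, INR_fact_lt_0|].
    apply pow_incr. split; [apply Rabs_pos | exact Hy]. }
  rewrite Rpow_mult_distr.
  replace (/ INR (fact m) * (q ^ m * M ^ m)) with (q ^ m * (M ^ m / INR (fact m))) by (unfold Rdiv; ring).
  apply Rmult_le_compat_l; [apply pow_le; lra | apply pow_div_fact_le_exp; exact HM].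
Qed.

Lemma Rabs_div_lt_1 (h rho : R) : Rabs h < rho -> 0 <= Rabs h / rho < 1.
Proof.
  intros Hh. assert (0 < rho) by (pose proof (Rabs_pos h); lra).
  split; [apply Rdiv_le_0_compat; [apply Rabs_pos | lra]|].
  apply (Rmult_lt_reg_r rho); [lra|]. unfold Rdiv. rewrite Rmult_assoc, Rinv_l by lra. lra.
Qed.

Definition dirichlet (a : nat -> R) (s : R) : R := Series (fun k => Rpower (a k) (- s)).

(* [d^n/ds^n a^(-s) = (-ln a)^n a^(-s)]: these are the Taylor coefficients at [s0]. *)
Definition dirichlet_taylor_term (a : nat -> R) (s0 : R) (n k : nat) : R :=
  Rpower (a k) (- s0) * (/ INR (fact n) * (- ln (a k)) ^ n).

Definition dirichlet_taylor_coef (a : nat -> R) (s0 : R) (n : nat) : R :=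
  Series (dirichlet_taylor_term a s0 n).

Definition dirichlet_majorant (a : nat -> R) (s0 rho : R) (k : nat) : R :=
  Rpower (a k) (- s0) * exp (rho * Rabs (ln (a k))).

Section DirichletTaylor.

Variables (a : nat -> R) (sig : R).
Hypothesis a_conv : forall s, sig < s -> ex_series (fun k => Rpower (a k) (- s)).

(* [a^(-s0) e^(rho |ln a|) <= a^(-(s0 - rho)) + a^(-(s0 + rho))]. *)
Lemma ex_series_dirichlet_majorant s0 rho : 0 <= rho -> sig < s0 - rho ->
  ex_series (dirichlet_majorant a s0 rho).
Proof.
  intros Hrho Hs0.
  apply (ex_series_Rabs_le _ (fun k => Rpower (a k) (- (s0 - rho)) + Rpower (a k) (- (s0 + rho)))).
  - intro k. unfold dirichlet_majorant, Rpower.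
    rewrite Rabs_pos_eq by (apply Rmult_le_pos; left; apply exp_pos).
    rewrite <- exp_plus. destruct (Rcase_abs (ln (a k))) as [Hl | Hl].
    + rewrite Rabs_left by exact Hl.
      replace (- s0 * ln (a k) + rho * - ln (a k)) with (- (s0 + rho) * ln (a k)) by ring.
      pose proof (exp_pos (- (s0 - rho) * ln (a k))). lra.
    + rewrite Rabs_pos_eq by lra.
      replace (- s0 * ln (a k) + rho * ln (a k)) with (- (s0 - rho) * ln (a k)) by ring.
      pose proof (exp_pos (- (s0 + rho) * ln (a k))). lra.
  - apply (ex_series_plus (fun k => Rpower (a k) (- (s0 - rho))) (fun k => Rpower (a k) (- (s0 + rho))));
      apply a_conv; lra.
Qed.

Lemma dirichlet_majorant_Series_nonneg s0 rho : 0 <= rho -> sig < s0 - rho ->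
  0 <= Series (dirichlet_majorant a s0 rho).
Proof.
  intros Hrho Hs0. apply Series_nonneg; [| apply ex_series_dirichlet_majorant; assumption].
  intro k. apply Rmult_le_pos; left; apply exp_pos.
Qed.

Lemma dirichlet_taylor_term_le s0 rho n k : 0 < rho ->
  Rabs (dirichlet_taylor_term a s0 n k) <= / rho ^ n * dirichlet_majorant a s0 rho k.
Proof.
  intros Hrho. unfold dirichlet_taylor_term, dirichlet_majorant, Rpower. set (L := ln (a k)).
  rewrite Rabs_mult, (Rabs_pos_eq (exp _)) by (left; apply exp_pos).
  rewrite Rabs_mult, Rabs_inv, (Rabs_pos_eq (INR (fact n))) by (left; apply INR_fact_lt_0).
  rewrite <- RPow_abs, Rabs_Ropp.
  assert (Hpow : 0 < rho ^ n) by (apply pow_lt; lra).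
  pose proof (pow_div_fact_le_exp (rho * Rabs L) n
                (Rmult_le_pos _ _ (Rlt_le _ _ Hrho) (Rabs_pos L))) as Hexp.
  rewrite Rpow_mult_distr in Hexp.
  replace (/ INR (fact n) * Rabs L ^ n) with (/ rho ^ n * (rho ^ n * Rabs L ^ n / INR (fact n)))
    by (field; split; [apply Rgt_not_eq, INR_fact_lt_0 | lra]).
  replace (/ rho ^ n * (exp (- s0 * L) * exp (rho * Rabs L)))
    with (exp (- s0 * L) * (/ rho ^ n * exp (rho * Rabs L))) by ring.
  apply Rmult_le_compat_l; [left; apply exp_pos|].
  apply Rmult_le_compat_l; [left; apply Rinv_0_lt_compat; exact Hpow | exact Hexp].
Qed.

Lemma ex_series_dirichlet_taylor_term s0 rho n : 0 < rho -> sig < s0 - rho ->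
  ex_series (dirichlet_taylor_term a s0 n).
Proof.
  intros Hrho Hs0. apply (ex_series_Rabs_le _ (fun k => / rho ^ n * dirichlet_majorant a s0 rho k)).
  - intro k; apply dirichlet_taylor_term_le; exact Hrho.
  - apply (ex_series_scal_l (/ rho ^ n) (dirichlet_majorant a s0 rho)).
    apply ex_series_dirichlet_majorant; lra.
Qed.

Lemma dirichlet_taylor_coef_le s0 rho n : 0 < rho -> sig < s0 - rho ->
  Rabs (dirichlet_taylor_coef a s0 n) <= / rho ^ n * Series (dirichlet_majorant a s0 rho).
Proof.
  intros Hrho Hs0. unfold dirichlet_taylor_coef. rewrite <- Series_scal_l.
  apply Series_Rabs_le.
  - intro k; apply dirichlet_taylor_term_le; exact Hrho.
  - apply (ex_series_scal_l (/ rho ^ n) (dirichlet_majorant a s0 rho)).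
    apply ex_series_dirichlet_majorant; lra.
Qed.

Lemma dirichlet_taylor_partial_sum s0 rho h N : 0 < rho -> sig < s0 - rho ->
  let w := fun k => Rpower (a k) (- s0) * exp_partial_sum N (- ln (a k) * h) in
  ex_series w /\ sum_f_R0 (fun n => dirichlet_taylor_coef a s0 n * h ^ n) N = Series w.
Proof.
  intros Hrho Hs0 w.
  set (f := fun n k => dirichlet_taylor_term a s0 n k * h ^ n).
  assert (Hf : forall n, ex_series (f n))
    by (intro n; apply ex_series_scal_r, (ex_series_dirichlet_taylor_term s0 rho); assumption).
  destruct (sum_f_R0_Series f N Hf) as [Hex Heq].
  assert (Hw : forall k, sum_f_R0 (fun n => f n k) N = w k).
  { intro k. unfold w, exp_partial_sum. rewrite scal_sum. apply sum_eq. intros i _.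
    unfold f, dirichlet_taylor_term. rewrite Rpow_mult_distr. ring. }
  split; [exact (ex_series_ext _ _ Hw Hex)|].
  rewrite (sum_eq _ (fun n => Series (f n)) N), Heq by
    (intros n _; unfold f, dirichlet_taylor_coef; rewrite Series_scal_r; reflexivity).
  apply Series_ext; exact Hw.
Qed.

Lemma dirichlet_taylor_error_le s0 rho h N : 0 < rho -> sig < s0 - rho -> Rabs h < rho ->
  Rabs (sum_f_R0 (fun n => dirichlet_taylor_coef a s0 n * h ^ n) N - dirichlet a (s0 + h))
  <= (Rabs h / rho) ^ (S N) / (1 - Rabs h / rho) * Series (dirichlet_majorant a s0 rho).
Proof.
  intros Hrho Hs0 Hh. set (q := Rabs h / rho).
  assert (Hq : 0 <= q < 1) by (apply Rabs_div_lt_1; exact Hh).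
  destruct (dirichlet_taylor_partial_sum s0 rho h N Hrho Hs0) as [Hwex ->].
  set (z := fun k => Rpower (a k) (- s0) * exp (- ln (a k) * h)).
  assert (Hz : dirichlet a (s0 + h) = Series z).
  { apply Series_ext. intro k. unfold z, Rpower. rewrite <- exp_plus. f_equal. ring. }
  assert (Hzex : ex_series z).
  { apply (ex_series_ext (fun k => Rpower (a k) (- (s0 + h)))).
    - intro k. unfold z, Rpower. rewrite <- exp_plus. f_equal. ring.
    - apply a_conv. apply Rabs_def2 in Hh. lra. }
  rewrite Hz, Rabs_minus_sym, <- Series_minus by assumption.
  rewrite <- Series_scal_l. apply Series_Rabs_le.
  2: { apply (ex_series_scal_l (q ^ S N / (1 - q)) (dirichlet_majorant a s0 rho)).
       apply ex_series_dirichlet_majorant; lra. }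
  intro k. unfold z. rewrite <- Rmult_minus_distr_l, Rabs_mult, (Rabs_pos_eq (Rpower _ _))
    by (left; apply exp_pos).
  set (M := rho * Rabs (ln (a k))).
  assert (Hy : Rabs (- ln (a k) * h) <= q * M).
  { unfold M, q. rewrite Rabs_mult, Rabs_Ropp. right. field. lra. }
  pose proof (exp_sub_partial_sum_le _ q M N Hq
                (Rmult_le_pos _ _ (Rlt_le _ _ Hrho) (Rabs_pos _)) Hy) as Hrem.
  unfold dirichlet_majorant. fold M.
  replace (q ^ S N / (1 - q) * (Rpower (a k) (- s0) * exp M))
    with (Rpower (a k) (- s0) * (q ^ S N * exp M / (1 - q))) by (field; lra).
  apply Rmult_le_compat_l; [left; apply exp_pos | exact Hrem].
Qed.

Lemma is_pseries_dirichlet s0 rho h : 0 < rho -> sig < s0 - rho -> Rabs h < rho ->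
  is_pseries (dirichlet_taylor_coef a s0) h (dirichlet a (s0 + h)).
Proof.
  intros Hrho Hs0 Hh. apply is_pseries_R.
  set (q := Rabs h / rho).
  assert (Hq : 0 <= q < 1) by (apply Rabs_div_lt_1; exact Hh).
  pose proof (dirichlet_majorant_Series_nonneg s0 rho (Rlt_le _ _ Hrho) Hs0) as HK.
  apply (is_series_of_geom_error _ _ (q / (1 - q) * Series (dirichlet_majorant a s0 rho)) q).
  - apply Rmult_le_pos; [apply Rdiv_le_0_compat; lra | exact HK].
  - rewrite Rabs_pos_eq; lra.
  - intro N. eapply Rle_trans; [apply (dirichlet_taylor_error_le s0 rho h N); assumption|].
    fold q. right. simpl. field. lra.
Qed.

End DirichletTaylor.

Lemma CV_radius_pos_of_coef_le (c : nat -> R) (C rho : R) :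
  0 < rho -> (forall n, Rabs (c n) <= / rho ^ n * C) -> Rbar_lt 0 (CV_radius c).
Proof.
  intros Hrho Hc.
  assert (Hdisk : CV_disk c (rho / 2)).
  { assert (Hhalf : Rabs (/ 2) < 1) by (rewrite Rabs_pos_eq; lra).
    destruct (Series_scal_geom C (/ 2) Hhalf) as [Hgeom _].
    apply (ex_series_Rabs_le _ (fun n => C * (/ 2) ^ n)); [| exact Hgeom].
    intro n. rewrite Rabs_Rabsolu, Rabs_mult, <- RPow_abs, (Rabs_pos_eq (rho / 2)) by lra.
    apply Rle_trans with (/ rho ^ n * C * (rho / 2) ^ n).
    - apply Rmult_le_compat_r; [apply pow_le; lra | apply Hc].
    - right. unfold Rdiv. rewrite Rpow_mult_distr, pow_inv. field. split; apply pow_nonzero; lra. }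
  apply Rbar_lt_le_trans with (Finite (rho / 2)); [simpl; lra|].
  apply (proj1 (Lub_Rbar_correct (CV_disk c))). exact Hdisk.
Qed.

Lemma PSeries_coef_eq_0 (c : nat -> R) (eta : posreal) :
  Rbar_lt 0 (CV_radius c) -> (forall t, Rabs t < eta -> PSeries c t = 0) ->
  forall n, c n = 0.
Proof.
  intros Hrad Hzero n. pose proof (Derive_n_coef c n Hrad) as HD.
  rewrite (Derive_n_ext_loc _ (fun _ => 0)) in HD.
  - assert (Hcn : c n * INR (fact n) = 0).
    { destruct n as [|m]; [| rewrite Derive_n_const in HD]; exact (eq_sym HD). }
    destruct (Rmult_integral _ _ Hcn) as [Hc0 | Hfact]; [exact Hc0|].
    pose proof (INR_fact_lt_0 n). lra.
  - exists eta. intros t Ht. apply Hzero. rewrite <- (Rminus_0_r t). exact Ht.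
Qed.

Section DirichletContinuation.

Variables (a b : nat -> R) (sig : R).
Hypothesis a_conv : forall s, sig < s -> ex_series (fun k => Rpower (a k) (- s)).
Hypothesis b_conv : forall s, sig < s -> ex_series (fun k => Rpower (b k) (- s)).

(* Both series expand around [s0] with radius [rho]; their difference has
   vanishing Taylor coefficients because it vanishes near [s0]. *)
Lemma dirichlet_eq_ball s0 rho eta : 0 < eta -> 0 < rho -> sig < s0 - rho ->
  (forall t, Rabs t < eta -> dirichlet a (s0 + t) = dirichlet b (s0 + t)) ->
  forall h, Rabs h < rho -> dirichlet a (s0 + h) = dirichlet b (s0 + h).
Proof.
  intros Heta Hrho Hs0 Heq.
  set (c := PS_minus (dirichlet_taylor_coef a s0) (dirichlet_taylor_coef b s0)).
  assert (Hc : forall h, Rabs h < rho ->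
             is_pseries c h (dirichlet a (s0 + h) - dirichlet b (s0 + h))).
  { intros h Hh. exact (is_pseries_minus _ _ _ _ _
      (is_pseries_dirichlet a sig a_conv s0 rho h Hrho Hs0 Hh)
      (is_pseries_dirichlet b sig b_conv s0 rho h Hrho Hs0 Hh)). }
  assert (Hrad : Rbar_lt 0 (CV_radius c)).
  { apply (CV_radius_pos_of_coef_le c
             (Series (dirichlet_majorant a s0 rho) + Series (dirichlet_majorant b s0 rho)) rho Hrho).
    intro n. unfold c, PS_minus. change (plus ?x (opp ?y)) with (x - y).
    unfold Rminus. eapply Rle_trans; [apply Rabs_triang|]. rewrite Rabs_Ropp, Rmult_plus_distr_l.
    apply Rplus_le_compat;
      [apply (dirichlet_taylor_coef_le a sig) | apply (dirichlet_taylor_coef_le b sig)]; assumption. }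
  assert (Hmin : 0 < Rmin eta rho) by (apply Rmin_pos; lra).
  assert (Hc0 : forall n, c n = 0).
  { apply (PSeries_coef_eq_0 c (mkposreal _ Hmin) Hrad). intros t Ht. simpl in Ht.
    assert (Rabs t < eta) by (eapply Rlt_le_trans; [exact Ht | apply Rmin_l]).
    assert (Htrho : Rabs t < rho) by (eapply Rlt_le_trans; [exact Ht | apply Rmin_r]).
    rewrite (is_pseries_unique _ _ _ (Hc t Htrho)), Heq by assumption. ring. }
  intros h Hh. apply Rminus_diag_uniq. rewrite <- (is_pseries_unique _ _ _ (Hc h Hh)).
  unfold PSeries. rewrite (Series_ext _ (fun k => 0 * h ^ k)) by (intro k; rewrite Hc0; reflexivity).
  rewrite Series_scal_l. ring.
Qed.

(* Each step recentres at distance [1/2] inside the known interval and uses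
   radius [1/2 + d], gaining [d]; the radius stays above [sig] since
   [d = (gamma - sig)/2]. *)
Lemma dirichlet_eq_extend_right gamma : sig < gamma ->
  (forall s, gamma < s < gamma + 1 -> dirichlet a s = dirichlet b s) ->
  forall s, gamma < s -> dirichlet a s = dirichlet b s.
Proof.
  intros Hgamma Hbase.
  set (d := (gamma - sig) / 2).
  assert (Hd : 0 < d) by (unfold d; lra).
  assert (Hstep : forall n s, gamma < s < gamma + 1 + INR n * d -> dirichlet a s = dirichlet b s).
  { induction n as [|n IH]; intros s Hs.
    - apply Hbase. simpl in Hs. lra.
    - set (T := gamma + 1 + INR n * d) in *.
      assert (HsT' : s < T + d) by (rewrite S_INR in Hs; unfold T; lra).
      assert (HT : gamma + 1 <= T).
      { assert (0 <= INR n * d) by (apply Rmult_le_pos; [apply pos_INR | lra]). unfold T; lra. }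
      destruct (Rlt_or_le s T) as [HsT | HsT]; [apply IH; lra|].
      replace s with (T - 1 / 2 + (s - (T - 1 / 2))) by ring.
      apply (dirichlet_eq_ball (T - 1 / 2) (1 / 2 + d) (1 / 2)); [lra | lra | unfold d in *; lra | |].
      + intros t Ht. apply Rabs_def2 in Ht. apply IH. lra.
      + rewrite Rabs_pos_eq; lra. }
  intros s Hs. destruct (INR_archimed d (s - gamma) Hd) as [n Hn].
  apply (Hstep n). lra.
Qed.

End DirichletContinuation.

Lemma dirichlet_shift_eq (a b : nat -> R) (k : nat) (s : R) :
  ex_series (fun j => Rpower (a j) (- s)) -> ex_series (fun j => Rpower (b j) (- s)) ->
  (forall j, (j < k)%nat -> a j = b j) -> dirichlet a s = dirichlet b s ->
  dirichlet (fun j => a (k + j)%nat) s = dirichlet (fun j => b (k + j)%nat) s.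
Proof.
  intros Ha Hb Hhead Heq. unfold dirichlet in *.
  destruct k as [|k]; [exact Heq|].
  rewrite (Series_incr_n _ (S k)), (Series_incr_n (fun j => Rpower (b j) (- s)) (S k)) in Heq
    by (lia || assumption).
  rewrite (sum_eq (fun j => Rpower (a j) (- s)) (fun j => Rpower (b j) (- s))) in Heq.
  - lra.
  - intros i Hi. simpl in Hi. rewrite Hhead by lia. reflexivity.
Qed.

(* For large [s] the term [u_0^(-s)] alone exceeds [dirichlet v s], which
   decays like [v_0^(-s)] when [u_0 < v_0 <= v_k]. *)
Lemma dirichlet_eq_head_le (u v : nat -> R) (sig gamma : R) :
  0 < u 0%nat -> 0 < v 0%nat -> (forall k, v 0%nat <= v k) ->
  (forall s, sig < s -> ex_series (fun k => Rpower (u k) (- s))) ->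
  (forall s, sig < s -> ex_series (fun k => Rpower (v k) (- s))) ->
  sig < gamma -> (forall s, gamma < s -> dirichlet u s = dirichlet v s) ->
  v 0%nat <= u 0%nat.
Proof.
  intros Hu0 Hv0 Hvmin Hsu Hsv Hgamma Heq. apply Rnot_lt_le. intro Hlt.
  set (s1 := gamma + 1).
  set (C := dirichlet v s1).
  assert (HC1 : ex_series (fun k => Rpower (v k) (- s1))) by (apply Hsv; unfold s1; lra).
  assert (HC : 0 < C).
  { eapply Rlt_le_trans; [| apply Series_ge_head; [intro; left; apply exp_pos | exact HC1]].
    apply exp_pos. }
  set (lu := ln (u 0%nat)). set (lv := ln (v 0%nat)).
  assert (Hl : lu < lv) by (apply ln_increasing; assumption).
  assert (Hlk : forall k, lv <= ln (v k)) by (intro k; apply ln_le; [exact Hv0 | apply Hvmin]).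
  set (t := (Rabs (ln C + s1 * lu) + 1) / (lv - lu)).
  assert (Ht : 0 <= t).
  { apply Rdiv_le_0_compat; [pose proof (Rabs_pos (ln C + s1 * lu)) |]; lra. }
  assert (Htl : t * (lv - lu) = Rabs (ln C + s1 * lu) + 1) by (unfold t; field; lra).
  set (s := s1 + t).
  assert (Hlow : exp (- s * lu) <= dirichlet u s).
  { apply (Series_ge_head (fun k => Rpower (u k) (- s))); [intro; left; apply exp_pos|].
    apply Hsu. unfold s, s1; lra. }
  assert (Hup : dirichlet v s <= exp (- t * lv) * C).
  { unfold C, dirichlet. rewrite <- Series_scal_l. apply Series_le.
    - intro k. unfold Rpower. split; [left; apply exp_pos|].
      replace (- s * ln (v k)) with (- s1 * ln (v k) + - t * ln (v k)) by (unfold s; ring).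
      rewrite exp_plus, (Rmult_comm (exp (- t * lv))).
      apply Rmult_le_compat_l; [left; apply exp_pos|].
      apply exp_le_compat. specialize (Hlk k). nra.
    - apply (ex_series_scal_l (exp (- t * lv)) (fun k => Rpower (v k) (- s1))). exact HC1. }
  rewrite Heq in Hlow by (unfold s, s1; lra).
  assert (Hexp : - t * lv + ln C < - s * lu).
  { unfold s. pose proof (Rle_abs (ln C + s1 * lu)). nra. }
  apply exp_increasing in Hexp. rewrite exp_plus, exp_ln in Hexp by exact HC. lra.
Qed.

Lemma dirichlet_inj (a b : nat -> R) (sig gamma : R) :
  (forall k, 0 < a k) -> (forall k, 0 < b k) ->
  (forall k, a k <= a (S k)) -> (forall k, b k <= b (S k)) ->
  (forall s, sig < s -> ex_series (fun k => Rpower (a k) (- s))) ->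
  (forall s, sig < s -> ex_series (fun k => Rpower (b k) (- s))) ->
  sig < gamma -> (forall s, gamma < s -> dirichlet a s = dirichlet b s) ->
  forall k, a k = b k.
Proof.
  intros Ha Hb Ham Hbm Hsa Hsb Hgamma Heq.
  assert (Hprefix : forall k j, (j < k)%nat -> a j = b j).
  2: { intro k. apply (Hprefix (S k)). lia. }
  induction k as [|k IH]; [intros; lia|].
  set (u := fun j => a (k + j)%nat). set (v := fun j => b (k + j)%nat).
  assert (Hsu : forall s, sig < s -> ex_series (fun j => Rpower (u j) (- s)))
    by (intros s Hs; apply (ex_series_incr_n (fun j => Rpower (a j) (- s)) k); auto).
  assert (Hsv : forall s, sig < s -> ex_series (fun j => Rpower (v j) (- s)))
    by (intros s Hs; apply (ex_series_incr_n (fun j => Rpower (b j) (- s)) k); auto).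
  assert (Huv : forall s, gamma < s -> dirichlet u s = dirichlet v s)
    by (intros s Hs; apply dirichlet_shift_eq; auto; [apply Hsa | apply Hsb]; lra).
  assert (Hupos : forall j, 0 < u j) by (intro; apply Ha).
  assert (Hvpos : forall j, 0 < v j) by (intro; apply Hb).
  assert (Hu0 : u 0%nat = a k) by (unfold u; rewrite Nat.add_0_r; reflexivity).
  assert (Hv0 : v 0%nat = b k) by (unfold v; rewrite Nat.add_0_r; reflexivity).
  assert (Hk : a k = b k).
  { rewrite <- Hu0, <- Hv0. apply Rle_antisym.
    - apply (dirichlet_eq_head_le v u sig gamma); auto.
      2: { intros s Hs. symmetry. auto. }
      intro j. rewrite Hu0. unfold u. apply Rge_le, growing_prop; [exact Ham | lia].
    - apply (dirichlet_eq_head_le u v sig gamma); auto.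
      intro j. rewrite Hv0. unfold v. apply Rge_le, growing_prop; [exact Hbm | lia]. }
  intros j Hj. destruct (Nat.eq_dec j k) as [-> | Hne]; [exact Hk | apply IH; lia].
Qed.

Definition sup_dist (I : R -> Prop) (u v : R -> R) : Rbar :=
  Lub_Rbar (fun r => exists s, I s /\ r = Rabs (u s - v s)).

Section SupDist.

Variable I : R -> Prop.

Lemma sup_dist_ge (u v : R -> R) (s : R) : I s -> Rbar_le (Rabs (u s - v s)) (sup_dist I u v).
Proof. intros Hs. apply (proj1 (Lub_Rbar_correct _)). exists s. split; [exact Hs | reflexivity]. Qed.

Lemma sup_dist_le (u v : R -> R) (B : R) :
  (forall s, I s -> Rabs (u s - v s) <= B) -> Rbar_le (sup_dist I u v) B.
Proof. intros H. apply (proj2 (Lub_Rbar_correct _)). intros r [s [Hs ->]]. apply H, Hs. Qed.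

Lemma sup_dist_nonneg (u v : R -> R) (s0 : R) : I s0 -> Rbar_le 0 (sup_dist I u v).
Proof.
  intros Hs0. eapply Rbar_le_trans; [| apply (sup_dist_ge u v s0 Hs0)]. apply Rabs_pos.
Qed.

Lemma sup_dist_finite (u v : R -> R) (s0 Bu Bv : R) : I s0 ->
  (forall s, I s -> Rabs (u s) <= Bu) -> (forall s, I s -> Rabs (v s) <= Bv) ->
  is_finite (sup_dist I u v).
Proof.
  intros Hs0 Hu Hv.
  assert (Hle : Rbar_le (sup_dist I u v) (Bu + Bv)).
  { apply sup_dist_le. intros s Hs. unfold Rminus. eapply Rle_trans; [apply Rabs_triang|].
    rewrite Rabs_Ropp. apply Rplus_le_compat; auto. }
  pose proof (sup_dist_nonneg u v s0 Hs0) as Hge.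
  destruct (sup_dist I u v); simpl in *; try contradiction; reflexivity.
Qed.

Lemma sup_dist_ge_real (u v : R -> R) (s : R) : is_finite (sup_dist I u v) -> I s ->
  Rabs (u s - v s) <= real (sup_dist I u v).
Proof. intros Hfin Hs. pose proof (sup_dist_ge u v s Hs) as H. rewrite <- Hfin in H. exact H. Qed.

Lemma sup_dist_sym (u v : R -> R) : sup_dist I u v = sup_dist I v u.
Proof.
  apply Lub_Rbar_eqset. intro r.
  split; intros [s [Hs ->]]; exists s; split; try exact Hs; apply Rabs_minus_sym.
Qed.

Lemma sup_dist_triangle (u v w : R -> R) :
  is_finite (sup_dist I u v) -> is_finite (sup_dist I v w) ->
  Rbar_le (sup_dist I u w) (Rbar_plus (sup_dist I u v) (sup_dist I v w)).
Proof.
  intros Huv Hvw. rewrite <- Huv, <- Hvw. apply sup_dist_le. intros s Hs.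
  replace (u s - w s) with ((u s - v s) + (v s - w s)) by ring.
  eapply Rle_trans; [apply Rabs_triang|].
  apply Rplus_le_compat; apply sup_dist_ge_real; assumption.
Qed.

Lemma sup_dist_eq_0 (u v : R -> R) (s0 : R) : I s0 ->
  sup_dist I u v = Finite 0 <-> forall s, I s -> u s = v s.
Proof.
  intros Hs0. split.
  - intros H0 s Hs. pose proof (sup_dist_ge u v s Hs) as H. rewrite H0 in H. simpl in H.
    pose proof (Rabs_pos (u s - v s)).
    assert (Hz : Rabs (u s - v s) = 0) by lra. apply Rabs_eq_0 in Hz. lra.
  - intros Heq. apply Rbar_le_antisym; [| exact (sup_dist_nonneg u v s0 Hs0)].
    apply sup_dist_le. intros s Hs. rewrite (Heq s Hs), Rminus_diag_eq, Rabs_R0 by reflexivity. lra.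
Qed.

End SupDist.

Lemma Rabs_ln_le (L U z : R) : 0 < L -> L <= z <= U -> Rabs (ln z) <= Rabs (ln L) + Rabs (ln U).
Proof.
  intros HL [HLz HzU]. assert (ln L <= ln z) by (apply ln_le; assumption).
  assert (ln z <= ln U) by (apply ln_le; lra).
  pose proof (Rle_abs (ln U)). pose proof (Rle_abs (- ln L)) as HnL. rewrite Rabs_Ropp in HnL.
  pose proof (Rabs_pos (ln L)). pose proof (Rabs_pos (ln U)).
  apply Rabs_le. lra.
Qed.

Lemma Rpower_opp_between (x g s : R) : g <= s <= g + 1 ->
  Rmin (Rpower x (- g)) (Rpower x (- (g + 1))) <= Rpower x (- s)
  <= Rpower x (- g) + Rpower x (- (g + 1)).
Proof.
  intros Hs. unfold Rpower.
  pose proof (exp_pos (- g * ln x)). pose proof (exp_pos (- (g + 1) * ln x)).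
  pose proof (Rmin_l (exp (- g * ln x)) (exp (- (g + 1) * ln x))).
  pose proof (Rmin_r (exp (- g * ln x)) (exp (- (g + 1) * ln x))).
  destruct (Rle_or_lt 0 (ln x)).
  - assert (exp (- (g + 1) * ln x) <= exp (- s * ln x)) by (apply exp_le_compat; nra).
    assert (exp (- s * ln x) <= exp (- g * ln x)) by (apply exp_le_compat; nra). lra.
  - assert (exp (- g * ln x) <= exp (- s * ln x)) by (apply exp_le_compat; nra).
    assert (exp (- s * ln x) <= exp (- (g + 1) * ln x)) by (apply exp_le_compat; nra). lra.
Qed.

Lemma dirichlet_ln_bounded (a : nat -> R) (sig gamma : R) :
  (forall s, sig < s -> ex_series (fun k => Rpower (a k) (- s))) -> sig < gamma ->
  exists B, forall s, gamma < s < gamma + 1 ->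
    0 < dirichlet a s /\ Rabs (ln (dirichlet a s)) <= B.
Proof.
  intros Hconv Hgamma.
  set (L := Rmin (Rpower (a 0%nat) (- gamma)) (Rpower (a 0%nat) (- (gamma + 1)))).
  set (U := Series (fun k => Rpower (a k) (- gamma) + Rpower (a k) (- (gamma + 1)))).
  assert (HL : 0 < L) by (apply Rmin_pos; apply exp_pos).
  exists (Rabs (ln L) + Rabs (ln U)). intros s Hs.
  assert (Hbounds : L <= dirichlet a s <= U).
  { split.
    - eapply Rle_trans; [| apply Series_ge_head; [intro; left; apply exp_pos | apply Hconv; lra]].
      apply Rpower_opp_between; lra.
    - apply Series_le.
      + intro k. split; [left; apply exp_pos | apply Rpower_opp_between; lra].
      + apply (ex_series_plus (fun k => Rpower (a k) (- gamma)) (fun k => Rpower (a k) (- (gamma + 1))));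
          apply Hconv; lra. }
  split; [lra | apply Rabs_ln_le; assumption].
Qed.

Lemma admissible_ln_zeta_bounded (X : SpecManifold) (gamma : R) :
  admissible X -> INR (sm_dim X) < 2 * gamma ->
  exists B, forall s, gamma < s < gamma + 1 -> 0 < zeta X s /\ Rabs (ln (zeta X s)) <= B.
Proof.
  intros [_ [_ [_ Hconv]]] Hdim.
  apply (dirichlet_ln_bounded (sm_eig X) (INR (sm_dim X) / 2)); [exact Hconv | lra].
Qed.

Lemma zeta_dist_eq_sup_dist (gamma : R) (X Y : SpecManifold) :
  (forall s, gamma < s < gamma + 1 -> 0 < zeta X s) ->
  (forall s, gamma < s < gamma + 1 -> 0 < zeta Y s) ->
  zeta_dist gamma X Y
  = sup_dist (fun s => gamma < s < gamma + 1) (fun s => ln (zeta X s)) (fun s => ln (zeta Y s)).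
Proof.
  intros HX HY. apply Lub_Rbar_eqset. intro r.
  split; intros [s [Hs ->]]; exists s; split; try exact Hs;
    rewrite (Rabs_pos_eq (zeta X s / zeta Y s)) by (left; apply Rdiv_lt_0_compat; auto);
    rewrite ln_div; auto.
Qed.

Lemma isospectral_of_zeta_eq (X Y : SpecManifold) (gamma : R) :
  admissible X -> admissible Y ->
  INR (sm_dim X) < 2 * gamma -> INR (sm_dim Y) < 2 * gamma ->
  (forall s, gamma < s < gamma + 1 -> zeta X s = zeta Y s) -> isospectral X Y.
Proof.
  intros [_ [HpX [HmX HsX]]] [_ [HpY [HmY HsY]]] HdX HdY Heq.
  set (sig := Rmax (INR (sm_dim X) / 2) (INR (sm_dim Y) / 2)).
  pose proof (Rmax_l (INR (sm_dim X) / 2) (INR (sm_dim Y) / 2)).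
  pose proof (Rmax_r (INR (sm_dim X) / 2) (INR (sm_dim Y) / 2)).
  assert (Hsig : sig < gamma) by (apply Rmax_lub_lt; lra).
  assert (HcX : forall s, sig < s -> ex_series (fun k => Rpower (sm_eig X k) (- s)))
    by (intros s Hs; apply HsX; unfold sig in Hs; lra).
  assert (HcY : forall s, sig < s -> ex_series (fun k => Rpower (sm_eig Y k) (- s)))
    by (intros s Hs; apply HsY; unfold sig in Hs; lra).
  intro k. apply (dirichlet_inj _ _ sig gamma); auto.
  apply (dirichlet_eq_extend_right _ _ sig); assumption.
Qed.

Theorem proposition2 (M : SpecManifold -> Prop) (gamma : R)
  (hM : forall X, M X -> admissible X)
  (hdim : forall X, M X -> INR (sm_dim X) < 2 * gamma) :
  (forall X Y, M X -> M Y -> is_finite (zeta_dist gamma X Y)) /\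
  (forall X Y, M X -> M Y -> Rbar_le (Finite 0) (zeta_dist gamma X Y)) /\
  (forall X Y, M X -> M Y -> zeta_dist gamma X Y = zeta_dist gamma Y X) /\
  (forall X Y Z, M X -> M Y -> M Z ->
     Rbar_le (zeta_dist gamma X Z)
             (Rbar_plus (zeta_dist gamma X Y) (zeta_dist gamma Y Z))) /\
  (forall X Y, M X -> M Y ->
     (zeta_dist gamma X Y = Finite 0 <-> isospectral X Y)).
Proof.
  set (I := fun s => gamma < s < gamma + 1).
  assert (HI : I (gamma + 1 / 2)) by (unfold I; lra).
  assert (Hbnd : forall X, M X ->
            exists B, forall s, I s -> 0 < zeta X s /\ Rabs (ln (zeta X s)) <= B)
    by (intros X HX; apply admissible_ln_zeta_bounded; auto).
  assert (Hd : forall X Y, M X -> M Y ->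
            zeta_dist gamma X Y = sup_dist I (fun s => ln (zeta X s)) (fun s => ln (zeta Y s))).
  { intros X Y HX HY. destruct (Hbnd X HX) as [BX HBX], (Hbnd Y HY) as [BY HBY].
    apply zeta_dist_eq_sup_dist; intros s Hs; [apply HBX | apply HBY]; exact Hs. }
  assert (Hfin : forall X Y, M X -> M Y -> is_finite (zeta_dist gamma X Y)).
  { intros X Y HX HY. rewrite Hd by assumption.
    destruct (Hbnd X HX) as [BX HBX], (Hbnd Y HY) as [BY HBY].
    apply (sup_dist_finite I _ _ _ BX BY HI); intros s Hs; [apply HBX | apply HBY]; exact Hs. }
  split; [exact Hfin|]. split.
  { intros X Y HX HY. rewrite Hd by assumption. exact (sup_dist_nonneg I _ _ _ HI). }
  split.
  { intros X Y HX HY. rewrite !Hd by assumption. apply sup_dist_sym. }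
  split.
  { intros X Y Z HX HY HZ. pose proof (Hfin X Y HX HY). pose proof (Hfin Y Z HY HZ).
    rewrite !Hd in * by assumption. apply sup_dist_triangle; assumption. }
  intros X Y HX HY. rewrite Hd, (sup_dist_eq_0 I _ _ _ HI) by assumption. split.
  - intros Hln. apply (isospectral_of_zeta_eq X Y gamma); auto.
    intros s Hs. destruct (Hbnd X HX) as [BX HBX], (Hbnd Y HY) as [BY HBY].
    apply ln_inv; [apply HBX | apply HBY | apply Hln]; exact Hs.
  - intros Hiso s Hs. unfold zeta. f_equal. apply Series_ext. intro k. rewrite Hiso. reflexivity.
Qed.
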